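(* Let $f\in\mathbb C\{\{x\}\}_{\mathbb P}$ with $R=\operatorname{rad}(f)>0$, let $G=\{a\in\mathbb C:|a|<R\}$, and for $a\in G$ let $f_a\in\mathbb C\{\{x-a\}\}_{\mathbb P}$ be the expansion of $f$ around $a$. Then $F=(f_a)_{a\in G}$ is a planar analytic function on $G$. Equivalently: for all $a,b\in G$ with $|b-a|<\operatorname{rad}(f_a)$, the expansion of $f_a$ around $b$ equals $f_b$.
   Context: Let $\mathbb P$ denote the set of finite planar reduced rooted trees (children of each vertex linearly ordered, no vertex with exactly one child), including the empty tree $\mathbf 1$ and the one-vertex tree $|$; $\deg(T)$ is the number of leaves, $L(T)$ the set of leaves. The algebra $\mathbb C\{x\}_{\mathbb P}$ has basis $\{x^T\}$, $x^{\mathbf 1}=1$, $x^|=x$, with $k$-linear operations $\omega_k$ ($k\ge2$), $\omega_k(x^{T_1},\dots,x^{T_k})=x^T$ where $T$ is obtained by attaching the nonempty $T_i$ in order as subtrees of the children of a new root (if exactly one is nonempty, $T$ is that one; if none, $T=\mathbf 1$); $y^T$ denotes the iteration of these operations along $T$ starting from $y$, e.g. $(x-a)^T$. $\mathbb C\{\{x-a\}\}_{\mathbb P}$ is the space of formal series $\sum_T\gamma_T(x-a)^T$, with coefficients $\langle f,(x-a)^T\rangle$. Radius of convergence: $\operatorname{rad}(\sum_T\gamma_T(x-a)^T)=\sup\{\rho\ge0:\sum_T|\gamma_T|\rho^{\deg T}<\infty\}$. Contraction $S|I$ for $I\subseteq L(S)$: the tree obtained from the subtree of $S$ spanned by the root-to-leaf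 paths to leaves in $I$ by suppressing all vertices with exactly one child; planar binomial coefficient $(S/T)=\#\{I\subseteq L(S):S|I=T\}$. If $f\in\mathbb C\{\{x-a\}\}_{\mathbb P}$ and $|b-a|<\operatorname{rad}(f)$, the expansion of $f$ around $b$ is $\sum_T\gamma_T(b)(x-b)^T\in\mathbb C\{\{x-b\}\}_{\mathbb P}$ with $\gamma_T(b)=\sum_{U\in\mathbb P}\langle f,(x-a)^U\rangle(U/T)(b-a)^{\deg U-\deg T}$. A planar analytic function on a region $D\subseteq\mathbb C$ is a family $F=(f_a)_{a\in D}$ with $f_a\in\mathbb C\{\{x-a\}\}_{\mathbb P}$, $\operatorname{rad}(f_a)>0$ for all $a$, such that whenever $a,b\in D$ and $\operatorname{rad}(f_a)>|b-a|$, the expansion of $f_a$ around $b$ equals $f_b$. *)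

From HB Require Import structures.
From mathcomp Require Import all_boot all_order all_algebra.
From mathcomp Require Import all_classical all_reals all_analysis.
From mathcomp Require Import complex.
From mathcomp Require finmap.

Set Implicit Arguments.
Unset Strict Implicit.
Unset Printing Implicit Defensive.
Import Order.TTheory GRing.Theory Num.Theory.
Import numFieldNormedType.Exports.
Local Open Scope ring_scope.

Inductive rtree : Type := RLeaf | RNode of seq rtree.

Fixpoint rdeg (t : rtree) : nat :=
  match t with RLeaf => 1%N | RNode ts => sumn (map rdeg ts) end.

(* reduced: no vertex with exactly one child (and an internal vertex has
   at least one child, i.e. it has at least two children) *)
Fixpoint rwf (t : rtree) : bool :=
  match t with RLeaf => true | RNode ts => (2 <= size ts)%N && all rwf ts end.

HB.instance Definition _ := gen_eqMixin rtree.
HB.instance Definition _ := gen_choiceMixin rtree.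

(* Contraction of a nonempty tree along a set of leaves, given as a mask
   m : bitseq of length rdeg t (the i-th leaf, in left-to-right planar
   order, is selected iff m`_i).  Result None = the empty tree 1.
   The spanned subtree is built recursively and vertices with exactly one
   remaining child are suppressed. *)
Fixpoint rcontract (t : rtree) (m : seq bool) : option rtree :=
  match t with
  | RLeaf => if head false m then Some RLeaf else None
  | RNode ts =>
      let fix go (ts : seq rtree) (m : seq bool) : seq (option rtree) :=
        match ts with
        | [::] => [::]
        | t :: ts' => rcontract t (take (rdeg t) m) :: go ts' (drop (rdeg t) m)
        end in
      let kept := pmap id (go ts m) in
      match kept with
      | [::] => None
      | [:: s] => Some s
      | _ => Some (RNode kept)
      end
  end.

(* The set P of finite planar reduced rooted trees, including the empty
   tree 1 (= None) and the one-vertex tree | (= Some RLeaf).           *)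
Definition pwf (o : option rtree) : bool :=
  if o is Some t then rwf t else true.

Record ptree := PTree { ptval : option rtree; ptwf : pwf ptval }.
HB.instance Definition _ := [isSub for ptval].
HB.instance Definition _ := [Choice of ptree by <:].

Definition ptree_empty : ptree := @PTree None isT.
Definition ptree_leaf : ptree := @PTree (Some RLeaf) isT.

Definition pdeg (T : ptree) : nat :=
  if ptval T is Some t then rdeg t else 0%N.

Definition pcontract (S : ptree) (m : seq bool) : option rtree :=
  if ptval S is Some s then rcontract s m else None.

Definition pbinom (S T : ptree) : nat :=
  #|[set m : (pdeg S).-tuple bool | pcontract S m == ptval T]|.

Section UnorderedSum.
Import finmap.
Local Open Scope fset_scope.

Definition pl_totally {I : choiceType} : set_system {fset I} :=
  filter_from setT (fun A : {fset I} => (fun B : {fset I} => fsubset A B : Prop)).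

Definition pl_partial_sum {I : choiceType} {V : zmodType}
  (x : I -> V) (A : {fset I}) : V := \sum_(i : A) x (val i).

Definition usum (I : choiceType) {K : numFieldType} {V : normedModType K}
   (x : I -> V) : V := lim (fmap (pl_partial_sum x) pl_totally).
End UnorderedSum.

(* Formal planar series in (x - a): the coefficient function
   T |-> <f, (x-a)^T>.  The centre a is bookkeeping only.              *)
Definition pser (R : realType) := ptree -> R[i].

Definition prad (R : realType) (f : pser R) : \bar R :=
  ereal_sup [set rho%:E | rho in
    [set rho : R | 0 <= rho /\
       (\esum_(T in [set: ptree]) ((ComplexField.Normc.normc (f T)) * rho ^+ pdeg T)%:E < +oo)%E]].

Definition pexpansion (R : realType) (f : pser R) (a b : R[i]) : pser R :=
  fun T => usum (fun U : ptree =>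
     (f U * (pbinom U T)%:R * (b - a) ^+ (pdeg U - pdeg T) : R[i]^o)).

Definition planar_analytic (R : realType) (D : set R[i])
  (F : R[i] -> pser R) : Prop :=
  (forall a, D a -> (0 < prad (F a))%E) /\
  (forall a b, D a -> D b -> ((ComplexField.Normc.normc (b - a))%:E < prad (F a))%E ->
      pexpansion (F a) a b = F b).

From HB Require Import structures.
From mathcomp Require Import all_boot all_order all_algebra.
From mathcomp Require Import all_classical all_reals all_analysis.
From mathcomp Require Import complex finmap lra ring.

Set Implicit Arguments.
Unset Strict Implicit.
Unset Printing Implicit Defensive.
Import Order.TTheory GRing.Theory Num.Theory.

(* Expanding [f] around [a] and then around [b] is a double series which,
   by absolute convergence, may be reordered; the planar Vandermonde identity
   [sum_V (U/V) (V/T) x^(|U|-|V|) y^(|V|-|T|) = (U/T) (x+y)^(|U|-|T|)],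
   which comes from composing contractions, identifies it with the expansion
   around [b] as soon as [|a| + |b - a| < rad f].  For a general pair with
   [|b - a| < rad f_a], walk from [a] to [b] along the segment in steps short
   enough for that condition; as the points are aligned, the remaining
   distance to [b] stays within the radius of each intermediate expansion. *)

(** * Contraction of planar trees *)

Definition odeg (o : option rtree) : nat := if o is Some t then rdeg t else 0.

Definition ocontract (o : option rtree) (m : seq bool) : option rtree :=
  if o is Some t then rcontract t m else None.

Definition mk_node (l : seq rtree) : option rtree :=
  match l with [::] => None | [:: s] => Some s | _ => Some (RNode l) end.

Fixpoint contract_children (ts : seq rtree) (m : seq bool) : seq (option rtree) :=
  if ts is t :: ts' then
    rcontract t (take (rdeg t) m) :: contract_children ts' (drop (rdeg t) m)
  else [::].

Lemma rcontract_node ts m :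
  rcontract (RNode ts) m = mk_node (pmap id (contract_children ts m)).
Proof. by []. Qed.

Fixpoint all_prop (P : rtree -> Prop) (ts : seq rtree) : Prop :=
  if ts is t :: ts' then P t /\ all_prop P ts' else True.

(* The automatically generated induction principle of [rtree] gives no
   induction hypothesis for the children of a node. *)
Definition rtree_nested_ind (P : rtree -> Prop) (PL : P RLeaf)
    (PN : forall ts, all_prop P ts -> P (RNode ts)) : forall t, P t :=
  fix F t := match t return P t with
  | RLeaf => PL
  | RNode ts => PN ts ((fix G ts : all_prop P ts :=
      if ts is t :: ts' return all_prop P ts then conj (F t) (G ts') else I) ts)
  end.

Lemma odeg_mk_node l : odeg (mk_node l) = sumn (map rdeg l).
Proof. by case: l => [|s [|s2 l]] //=; rewrite addn0. Qed.

Lemma sumn_pmap_odeg k : sumn (map rdeg (pmap id k)) = sumn (map odeg k).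
Proof. by elim: k => [|[s|] k IHk] //=; rewrite IHk. Qed.

Lemma size_take_rdeg t ts (m : seq bool) :
  size m = sumn (map rdeg (t :: ts)) -> size (take (rdeg t) m) = rdeg t.
Proof. by move=> sm; rewrite size_takel // sm leq_addr. Qed.

Lemma odeg_rcontract t m : size m = rdeg t -> odeg (rcontract t m) = count id m.
Proof.
elim/rtree_nested_ind: t m => [|ts IH] m /=.
  by case: m => [|b [|]] //= _; case: b.
rewrite odeg_mk_node sumn_pmap_odeg.
elim: ts IH m => [|t ts IHts] /=; first by move=> _ [].
move=> [IHt IH] m sm; rewrite (IHt _ (size_take_rdeg sm)) IHts //.
  by rewrite -count_cat cat_take_drop.
by rewrite size_drop sm addKn.
Qed.

Lemma pwf_mk_node l : all rwf l -> pwf (mk_node l).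
Proof. by case: l => [|s [|s2 l]] //= /andP[]. Qed.

Lemma pwf_rcontract t m : rwf t -> pwf (rcontract t m).
Proof.
elim/rtree_nested_ind: t m => [|ts IH] m /=; first by case: (head false m).
case/andP=> _ wf_ts; apply: pwf_mk_node.
elim: ts IH wf_ts m => [|t ts IHts] //= [IHt IH] /andP[wt wts] m.
have := IHt (take (rdeg t) m) wt.
by case: (rcontract t _) => [s|] /= ws; rewrite ?ws IHts.
Qed.

Lemma rcontract_full t : rwf t -> rcontract t (nseq (rdeg t) true) = Some t.
Proof.
elim/rtree_nested_ind: t => [|ts IH] //=.
case/andP => size_ts wf_ts.
have -> : Some (RNode ts) = mk_node ts by case: ts size_ts {IH wf_ts} => [|s [|]].
congr mk_node; elim: ts IH wf_ts {size_ts} => [|t ts IHts] //= [IHt IH] /andP[wt wts].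
rewrite nseqD take_size_cat ?size_nseq // drop_size_cat ?size_nseq //.
by rewrite IHt //= IHts.
Qed.

(* [refine_mask m m'] reads [m'] as a mask on the positions selected by [m]. *)
Fixpoint refine_mask (m m' : seq bool) : seq bool :=
  if m is b :: m0 then
    if b then head false m' :: refine_mask m0 (behead m')
    else false :: refine_mask m0 m'
  else [::].

Lemma take_refine_mask k m m' :
  take k (refine_mask m m') = refine_mask (take k m) (take (count id (take k m)) m').
Proof.
elim: m k m' => [|[] m IHm] [|k] m' //=; rewrite IHm //.
by case: m'.
Qed.

Lemma drop_refine_mask k m m' :
  drop k (refine_mask m m') = refine_mask (drop k m) (drop (count id (take k m)) m').
Proof.
elim: m k m' => [|[] m IHm] [|k] m' //=; rewrite ?drop0 // IHm.
by case: m'.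
Qed.

Fixpoint ocontract_seq (k : seq (option rtree)) (m : seq bool) : seq (option rtree) :=
  if k is o :: k' then
    ocontract o (take (odeg o) m) :: ocontract_seq k' (drop (odeg o) m)
  else [::].

Lemma pmap_ocontract_seq k m :
  pmap id (ocontract_seq k m) = pmap id (contract_children (pmap id k) m).
Proof. by elim: k m => [|[s|] k IHk] m //=; rewrite ?drop0 IHk. Qed.

Lemma ocontract_mk_node l m : size m = sumn (map rdeg l) ->
  ocontract (mk_node l) m = mk_node (pmap id (contract_children l m)).
Proof.
case: l => [|s [|s2 l]] //=; rewrite addn0 => <-; rewrite take_size.
by case: (rcontract s m).
Qed.

Lemma ocontract_rcontract t m m' : size m = rdeg t -> size m' = count id m ->
  ocontract (rcontract t m) m' = rcontract t (refine_mask m m').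
Proof.
elim/rtree_nested_ind: t m m' => [|ts IH] m m'.
  by case: m => [|[] [|]] //= _; case: m' => [|b' [|]].
move=> sm sm'; rewrite !rcontract_node ocontract_mk_node; last first.
  by rewrite sm' -(odeg_rcontract sm) rcontract_node odeg_mk_node sumn_pmap_odeg.
rewrite -pmap_ocontract_seq; congr (mk_node (pmap id _)).
elim: ts IH m m' sm sm' => [|t ts IHts] /=; first by move=> _ [].
move=> [IHt IH] m m' sm sm'.
have smt := size_take_rdeg sm.
have count_m : count id m = count id (take (rdeg t) m) + count id (drop (rdeg t) m).
  by rewrite -count_cat cat_take_drop.
rewrite take_refine_mask drop_refine_mask -(IHt _ _ smt); last first.
  by rewrite size_takel // sm' count_m leq_addr.
rewrite odeg_rcontract // IHts //; first by rewrite size_drop sm addKn.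
by rewrite size_drop sm' count_m addKn.
Qed.

Lemma pwf_pcontract U m : pwf (pcontract U m).
Proof. by case: U => [[t|] wf_t] //; exact: pwf_rcontract. Qed.

Definition contraction (U : ptree) (m : seq bool) : ptree := PTree (pwf_pcontract U m).

Lemma contraction_eqE U m T : (contraction U m == T) = (pcontract U m == ptval T).
Proof. by rewrite -val_eqE. Qed.

Lemma pdeg_contraction U m : size m = pdeg U -> pdeg (contraction U m) = count id m.
Proof.
rewrite /pdeg /contraction /pcontract /=; case: U => [[t|] wf_t] /=.
  by move=> /odeg_rcontract; case: (rcontract t m).
by case: m.
Qed.

Lemma pcontract_contraction U m m' : size m = pdeg U -> size m' = count id m ->
  pcontract (contraction U m) m' = pcontract U (refine_mask m m').
Proof.
rewrite /contraction /pcontract /=; case: U => [[t|] wf_t] /= sm sm'.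
  by rewrite -ocontract_rcontract //; case: (rcontract t m).
by case: m sm sm' => // _; case: m'.
Qed.

Lemma pcontract_full U : pcontract U (nseq (pdeg U) true) = ptval U.
Proof. by case: U => [[t|] wf_t] //; exact: rcontract_full. Qed.

(** * Sums over masks *)

Local Open Scope ring_scope.

Section MaskSums.
Variable V : nmodType.

Definition msum n (F : seq bool -> V) := \sum_(m : n.-tuple bool) F m.

Lemma msum0 F : msum 0 F = F [::].
Proof.
rewrite /msum (big_pred1 [tuple]) // => t; exact/esym/eqP/tuple0.
Qed.

Lemma msumS n F : msum n.+1 F =
  msum n (fun m => F (false :: m)) + msum n (fun m => F (true :: m)).
Proof.
rewrite /msum (reindex (fun p : bool * n.-tuple bool => [tuple of p.1 :: p.2])).
  rewrite -(pair_big predT predT (fun b (t : n.-tuple bool) => F (b :: t))) /=.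
  by rewrite big_bool addrC.
exists (fun t : n.+1.-tuple bool => (thead t, [tuple of behead t])).
  by move=> [b t] _; congr (_, _); apply: val_inj.
by move=> t _; rewrite [t in RHS]tuple_eta; apply: val_inj.
Qed.

Lemma eq_msum n F G : (forall m, size m = n -> F m = G m) -> msum n F = msum n G.
Proof. by move=> eqFG; apply: eq_bigr => m _; rewrite eqFG ?size_tuple. Qed.

Lemma msum_zero n : msum n (fun=> 0) = 0.
Proof. exact: big1. Qed.

End MaskSums.

Lemma count_le_implb (J m : seq bool) : all2 implb J m -> (count id J <= count id m)%N.
Proof.
elim: J m => [|a J IHJ] [|b m] //= /andP[ab /IHJ le_Jm].
by case: a b ab => [] [] //= _; rewrite ?leq_add2l ?add0n ?add1n // leqW.
Qed.

Lemma count_tuple_le n (m : n.-tuple bool) : (count id m <= n)%N.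
Proof. by have := count_size id m; rewrite size_tuple. Qed.

Section MaskIdentities.
Variable K : comNzRingType.
Implicit Types (x y : K) (m J : seq bool).

Lemma msum_binomial n x y :
  msum n (fun m => x ^+ (n - count id m) * y ^+ count id m) = (x + y) ^+ n.
Proof.
elim: n => [|n IHn]; first by rewrite msum0 /= expr0 mulr1.
rewrite msumS exprS mulrDl -IHn !big_distrr /=.
congr (_ + _); apply: eq_bigr => m _ /=.
  by rewrite add0n subSn ?count_tuple_le // exprS mulrA.
by rewrite add1n subSS exprS mulrCA.
Qed.

Lemma msum_supmasks J x y :
  msum (size J) (fun m => if all2 implb J m then
     x ^+ (size J - count id m) * y ^+ (count id m - count id J) else 0)
  = (x + y) ^+ (size J - count id J).
Proof.
elim: J => [|[] J IHJ]; first by rewrite msum0 /= !expr0 mulr1.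
  rewrite msumS /= (eq_msum (G := fun=> 0)) // msum_zero add0r -IHJ.
  by apply: eq_bigr => m _ /=; rewrite !add1n !subSS.
rewrite msumS /= add0n subSn ?count_size // exprS mulrDl -IHJ !big_distrr /=.
congr (_ + _); apply: eq_bigr => m _ /=; case: ifP => [Jm|_]; rewrite ?mulr0 //.
  by rewrite add0n subSn ?count_tuple_le // exprS mulrA.
by rewrite add1n subSS subSn ?count_le_implb // exprS mulrCA.
Qed.

Lemma msum_refine_mask m (G : seq bool -> K) :
  msum (count id m) (fun m' => G (refine_mask m m')) =
  msum (size m) (fun J => if all2 implb J m then G J else 0).
Proof.
elim: m G => [|[] m IHm] G /=; first by rewrite !msum0.
  by rewrite add1n !msumS (IHm (fun J => G (false :: J))) (IHm (fun J => G (true :: J))).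
rewrite add0n msumS [X in _ + X](eq_msum (G := fun=> 0)) // msum_zero addr0.
exact: (IHm (fun J => G (false :: J))).
Qed.

End MaskIdentities.

(** * Planar binomial coefficients *)

Definition contractions (U : ptree) : seq ptree :=
  undup [seq contraction U m | m : (pdeg U).-tuple bool].

Lemma uniq_contractions U : uniq (contractions U).
Proof. exact: undup_uniq. Qed.

Lemma contraction_in_contractions U (m : (pdeg U).-tuple bool) :
  contraction U m \in contractions U.
Proof. by rewrite mem_undup; apply: map_f; rewrite mem_enum. Qed.

Lemma pbinomE U T :
  pbinom U T = (\sum_(m : (pdeg U).-tuple bool) (contraction U m == T))%N.
Proof.
rewrite /pbinom -sum1dep_card big_mkcond /=; apply: eq_bigr => m _.
by rewrite contraction_eqE; case: eqP.
Qed.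

Lemma pbinom_notin U T : T \notin contractions U -> pbinom U T = 0%N.
Proof.
move=> T_notin; rewrite pbinomE big1 // => m _.
by case: eqP => // eqT; rewrite -eqT contraction_in_contractions in T_notin.
Qed.

(* A contraction has at most as many leaves as the tree, and equally many
   only for the full mask. *)
Lemma pbinom_small U T : (pdeg U <= pdeg T)%N -> pbinom U T = (U == T).
Proof.
move=> le_UT; rewrite pbinomE (bigD1 (nseq_tuple (pdeg U) true)) //= big1 ?addn0.
  by rewrite contraction_eqE pcontract_full val_eqE.
move=> m m_ne; case: eqP => // eqT; move: m_ne.
have sm := size_tuple m.
have all_m : all id m.
  by rewrite all_count eqn_leq count_size sm -(pdeg_contraction sm) eqT.
have /all_pred1P m_full : all (pred1 true) m by rewrite (eq_all (a2 := id) eqb_id).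
by rewrite -val_eqE /= m_full sm eqxx.
Qed.

Section PlanarBinomialIdentities.
Variable K : comNzRingType.
Implicit Types x y : K.

Lemma pbinom_msum U T : (pbinom U T)%:R =
  msum (pdeg U) (fun m => ((pcontract U m == ptval T) : nat)%:R) :> K.
Proof. by rewrite pbinomE natr_sum; apply: eq_bigr => m _; rewrite contraction_eqE. Qed.

Lemma sum_pbinom U (phi : ptree -> K) :
  \sum_(V <- contractions U) (pbinom U V)%:R * phi V =
  msum (pdeg U) (fun m => phi (contraction U m)).
Proof.
under eq_bigr do rewrite pbinomE natr_sum big_distrl /=.
rewrite exchange_big /=; apply: eq_bigr => m _.
rewrite (bigD1_seq (contraction U m)) ?contraction_in_contractions ?uniq_contractions //=.
rewrite eqxx mul1r big1 ?addr0 // => V.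
by rewrite eq_sym => /negbTE ->; rewrite mul0r.
Qed.

Lemma pbinom_binomial U x y :
  \sum_(V <- contractions U) (pbinom U V)%:R * (x ^+ (pdeg U - pdeg V) * y ^+ pdeg V)
  = (x + y) ^+ pdeg U.
Proof.
rewrite sum_pbinom -msum_binomial; apply: eq_msum => m sm.
by rewrite pdeg_contraction.
Qed.

Lemma pbinom_contraction U T m : size m = pdeg U ->
  (pbinom (contraction U m) T)%:R = msum (pdeg U) (fun J =>
    if all2 implb J m then ((pcontract U J == ptval T) : nat)%:R else 0) :> K.
Proof.
move=> sm; rewrite pbinom_msum (eq_msum (G := fun m' =>
  ((pcontract U (refine_mask m m') == ptval T) : nat)%:R)) => [|m' sm'].
  rewrite pdeg_contraction //.
  by rewrite (msum_refine_mask m (fun J => ((pcontract U J == ptval T) : nat)%:R)) sm.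
by rewrite pcontract_contraction // -(pdeg_contraction sm).
Qed.

(* By [pbinom_contraction] the double sum runs over the pairs of masks
   [J <= m] and factors through [msum_supmasks]. *)
Lemma pbinom_vandermonde U T x y :
  \sum_(V <- contractions U) (pbinom U V)%:R * (x ^+ (pdeg U - pdeg V) *
      ((pbinom V T)%:R * y ^+ (pdeg V - pdeg T)))
  = (pbinom U T)%:R * (x + y) ^+ (pdeg U - pdeg T).
Proof.
rewrite sum_pbinom (eq_msum (G := fun m => msum (pdeg U) (fun J =>
   if all2 implb J m then ((pcontract U J == ptval T) : nat)%:R *
     (x ^+ (pdeg U - count id m) * y ^+ (count id m - pdeg T)) else 0))) => [|m sm].
  rewrite /msum exchange_big /= pbinom_msum /msum big_distrl /=.
  apply: eq_bigr => J _; case: eqP => [eqT|_]; last first.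
    by rewrite mul0r big1 // => m _; case: ifP; rewrite ?mul0r.
  have count_J : pdeg T = count id J.
    by rewrite -(@pdeg_contraction U J) ?size_tuple //; congr pdeg; apply: val_inj.
  have := msum_supmasks J x y; rewrite size_tuple /msum -count_J => <-.
  by rewrite mul1r; apply: eq_bigr => m _; case: ifP; rewrite ?mul1r.
rewrite pdeg_contraction // pbinom_contraction // /msum big_distrl big_distrr /=.
by apply: eq_bigr => J _; case: ifP => _; rewrite ?mul0r ?mulr0 // mulrCA mulrC.
Qed.

End PlanarBinomialIdentities.

(** * Unordered sums of complex families *)

Lemma ler_sum_uniq (T : eqType) (R : numDomainType) (s s' : seq T) (F : T -> R) :
  uniq s -> uniq s' -> (forall i, i \in s' -> 0 <= F i) ->
  (forall i, i \in s -> i \notin s' -> F i = 0) ->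
  \sum_(i <- s) F i <= \sum_(i <- s') F i.
Proof.
move=> us us' F_ge0 F0; rewrite (bigID (mem s')) /= [X in _ + X]big1_seq ?addr0; last first.
  by move=> i /andP[? ?]; apply: F0.
have -> : \sum_(i <- s | i \in s') F i = \sum_(i <- s' | i \in s) F i.
  rewrite -big_filter -[RHS]big_filter; apply/perm_big/uniq_perm; rewrite ?filter_uniq //.
  by move=> i; rewrite !mem_filter andbC.
rewrite [X in _ <= X](bigID (mem s)) /= lerDl big_seq_cond sumr_ge0 // => i.
by case/andP => /F_ge0.
Qed.

Lemma big_uniq_widen (T : eqType) (V : nmodType) (s s' : seq T) (F : T -> V) :
  uniq s -> uniq s' -> {subset s <= s'} -> (forall i, i \in s' -> i \notin s -> F i = 0) ->
  \sum_(i <- s') F i = \sum_(i <- s) F i.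
Proof.
move=> us us' ss' F0; rewrite (bigID (mem s)) /= [X in _ + X]big1_seq ?addr0; last first.
  by move=> i /andP[? ?]; apply: F0.
rewrite -big_filter; apply: perm_big; apply: uniq_perm; rewrite ?filter_uniq // => i.
by rewrite mem_filter andb_idr //; exact: ss'.
Qed.

Local Open Scope complex_scope.
Import ComplexField.Normc.

Section ComplexNorm.
Variable R : realType.
Implicit Types x y : R[i].

Lemma normc_ge0 x : 0 <= normc x.
Proof. by case: x => a b; exact: sqrtr_ge0. Qed.

Lemma normc_real (r : R) : normc r%:C = `|r|.
Proof. by rewrite /normc /= expr0n addr0 sqrtr_sqr. Qed.

Lemma normc_nat n : normc (n%:R : R[i]) = n%:R.
Proof. by rewrite -(rmorph_nat (real_complex R)) normc_real ger0_norm. Qed.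

Lemma normcX x n : normc (x ^+ n) = normc x ^+ n.
Proof. by elim: n => [|n IHn]; rewrite ?normc1 // !exprS normcM IHn. Qed.

Lemma normc_subC x y : normc (x - y) = normc (y - x).
Proof. by rewrite -opprB normcN. Qed.

Lemma normr_normc x : `|x| = (normc x)%:C.
Proof. by rewrite normc_def; case: x. Qed.

Lemma normc_Re x : `|complex.Re x| <= normc x.
Proof. by case: x => a b /=; rewrite -sqrtr_sqr ler_wsqrtr // lerDl sqr_ge0. Qed.

Lemma normc_Im x : `|complex.Im x| <= normc x.
Proof. by case: x => a b /=; rewrite -sqrtr_sqr ler_wsqrtr // lerDr sqr_ge0. Qed.

Lemma normc_sum (T : Type) (s : seq T) (F : T -> R[i]) :
  normc (\sum_(i <- s) F i) <= \sum_(i <- s) normc (F i).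
Proof.
elim: s => [|a s IHs]; first by rewrite !big_nil normc0.
by rewrite !big_cons (le_trans (le_normcD _ _)) // lerD.
Qed.

End ComplexNorm.

Lemma totally_filter (I : choiceType) : ProperFilter (@pl_totally I).
Proof.
apply: filter_from_proper; last by move=> A _; exists A; exact: fsubset_refl.
apply: filter_fromT_filter; first by exists fset0.
move=> A B; exists (A `|` B)%fset => D /= sABD.
by split; apply: fsubset_trans sABD; rewrite ?fsubsetUl ?fsubsetUr.
Qed.
#[local] Existing Instance totally_filter.

Section UnorderedSums.
Variables (R : realType) (I : choiceType).
Local Notation C := R[i].
Implicit Types (f g : I -> C) (p q : I -> R) (A B : {fset I}).

Definition finsum {V : nmodType} (f : I -> V) A : V := \sum_(i <- A) f i.

Definition bounded_sums p := exists M, forall A, finsum p A <= M.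

Definition abs_summable f := bounded_sums (fun i => normc (f i)).

Definition has_sum f (L : C) := forall e : R, 0 < e -> exists A0 : {fset I},
  forall B, fsubset A0 B -> normc (finsum f B - L) <= e.

(* [usum] is a limit along finite subsets, hence junk unless [has_sum] holds. *)
Definition usumc f : C := usum (fun i => f i : C^o).

Lemma has_sum_usumc f L : has_sum f L -> usumc f = L.
Proof.
move=> fL.
suff cvgL : (pl_partial_sum (fun i => f i : C^o) @ pl_totally --> (L : C^o))%classic.
  exact: norm_cvg_lim cvgL.
apply/cvgrPdist_le => -[e ei]; rewrite ltcE /= => /andP[/eqP -> e_gt0].
have [A0 A0f] := fL e e_gt0; exists A0 => // B A0B /=.
rewrite normr_normc lecR normc_subC.
suff -> : pl_partial_sum (fun i => f i : C^o) B = finsum f B by exact: A0f.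
by rewrite /pl_partial_sum /finsum big_seq_fsetE.
Qed.

Lemma finsum_le p A B : (forall i, 0 <= p i) -> fsubset A B -> finsum p A <= finsum p B.
Proof.
move=> p_ge0 /fsubsetP sAB; apply: ler_sum_uniq; rewrite ?fset_uniq // => i iA.
by rewrite sAB.
Qed.

Lemma bounded_sums_le p q : (forall i, q i <= p i) -> bounded_sums p -> bounded_sums q.
Proof. by move=> le_qp [M pM]; exists M => A; apply: le_trans (pM A); exact: ler_sum. Qed.

Lemma bounded_sumsD p q : bounded_sums p -> bounded_sums q ->
  bounded_sums (fun i => p i + q i).
Proof.
by move=> [M pM] [N qN]; exists (M + N) => A; rewrite /finsum big_split lerD ?pM ?qN.
Qed.

Lemma abs_summableD f g : abs_summable f -> abs_summable g ->
  abs_summable (fun i => f i + g i).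
Proof.
by move=> sf sg; apply: bounded_sums_le (bounded_sumsD sf sg) => i; exact: le_normcD.
Qed.

Lemma abs_summable_fin f A : (forall i, i \notin A -> f i = 0) -> abs_summable f.
Proof.
move=> f0; exists (finsum (fun i => normc (f i)) A) => B.
apply: ler_sum_uniq; rewrite ?fset_uniq // => i _; first exact: normc_ge0.
by move=> /f0 ->; exact: normc0.
Qed.

Lemma abs_summable_restrict f (P : pred I) :
  abs_summable f -> abs_summable (fun i => if P i then 0 else f i).
Proof.
by apply: bounded_sums_le => i; case: ifP; rewrite ?normc0 ?normc_ge0.
Qed.

Lemma has_sumD f g L M : has_sum f L -> has_sum g M ->
  has_sum (fun i => f i + g i) (L + M).
Proof.
move=> fL gM e e_gt0; have e2_gt0 : 0 < e / 2 by rewrite divr_gt0.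
have [A1 A1f] := fL _ e2_gt0; have [A2 A2g] := gM _ e2_gt0.
exists (A1 `|` A2)%fset => B; rewrite fsubUset => /andP[A1B A2B].
rewrite /finsum big_split /= opprD addrACA (splitr e).
exact: le_trans (le_normcD _ _) (lerD (A1f _ A1B) (A2g _ A2B)).
Qed.

Lemma has_sumZ c f L : has_sum f L -> has_sum (fun i => c * f i) (c * L).
Proof.
move=> fL e e_gt0; have c1_gt0 : 0 < normc c + 1 by rewrite ltr_wpDl ?normc_ge0.
have [A0 A0f] := fL _ (divr_gt0 e_gt0 c1_gt0); exists A0 => B A0B.
rewrite /finsum -big_distrr -mulrBr normcM.
apply: le_trans (ler_wpM2l (normc_ge0 _) (A0f _ A0B)) _.
rewrite mulrCA ger_pMr ?ler_pdivrMr // mul1r lerDl //.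
Qed.

Lemma finsum_sup p : (forall i, 0 <= p i) -> bounded_sums p ->
  exists L, (forall A, finsum p A <= L) /\ (forall e, 0 < e -> exists A0, L - e < finsum p A0).
Proof.
move=> p_ge0 [M pM]; set S := [set finsum p A | A in [set: {fset I}]]%classic.
have supS : has_sup S by split; [exists (finsum p fset0), fset0 | exists M => _ [A _ <-]].
exists (sup S); split=> [A|e e_gt0]; first by apply: sup_upper_bound => //; exists A.
by have [_ [A _ <-] ?] := sup_adherent e_gt0 supS; exists A.
Qed.

Lemma has_sum_nonneg p : (forall i, 0 <= p i) -> bounded_sums p ->
  exists L : R, has_sum (fun i => (p i)%:C) L%:C.
Proof.
move=> p_ge0 bp; have [L [ubL approxL]] := finsum_sup p_ge0 bp.
exists L => e e_gt0; have [A0 A0L] := approxL _ e_gt0; exists A0 => B A0B.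
rewrite /finsum -rmorph_sum -rmorphB normc_real ler_norml.
have := ubL B; have := finsum_le p_ge0 A0B; move: A0L; rewrite /finsum => ? ? ?.
apply/andP; split; lra.
Qed.

Lemma finsum_tail p : (forall i, 0 <= p i) -> bounded_sums p ->
  forall e, 0 < e -> exists A1, forall B, \sum_(i <- B | i \notin A1) p i <= e.
Proof.
move=> p_ge0 bp e e_gt0; have [L [ubL approxL]] := finsum_sup p_ge0 bp.
have [A1 A1L] := approxL _ e_gt0; exists A1 => B.
have : finsum p (A1 `|` B)%fset = finsum p A1 + \sum_(i <- B | i \notin A1) p i.
  rewrite /finsum (bigID (mem A1)) /=; congr (_ + _).
    rewrite -big_filter; apply: perm_big; apply: uniq_perm; rewrite ?filter_uniq ?fset_uniq //.
    by move=> i; rewrite mem_filter in_fsetU andb_idr // => ->.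
  rewrite -big_filter -[RHS]big_filter; apply/perm_big/uniq_perm.
  - by rewrite filter_uniq ?fset_uniq.
  - by rewrite filter_uniq ?fset_uniq.
  by move=> i; rewrite !mem_filter in_fsetU; case: (i \in A1).
have := ubL (A1 `|` B)%fset; lra.
Qed.

Lemma has_sum_real q : bounded_sums (fun i => `|q i|) ->
  exists L, has_sum (fun i => (q i)%:C) L.
Proof.
move=> bq; have qq_ge0 i : 0 <= q i + `|q i|.
  by have := ler_norm (- q i); rewrite normrN; lra.
have bqq : bounded_sums (fun i => q i + `|q i|).
  by apply: bounded_sums_le (bounded_sumsD bq bq) => i; rewrite lerD2r ler_norm.
have [L1 sum1] := has_sum_nonneg qq_ge0 bqq.
have [L2 sum2] := @has_sum_nonneg (fun i => `|q i|) (fun i => normr_ge0 _) bq.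
exists (L1%:C + -1 * L2%:C); have := has_sumD sum1 (has_sumZ (-1) sum2).
by congr has_sum; apply: funext => i; rewrite rmorphD /=; ring.
Qed.

Lemma abs_summable_has_sum f : abs_summable f -> has_sum f (usumc f).
Proof.
move=> sf; suff [L fL] : exists L, has_sum f L by rewrite (has_sum_usumc fL).
have [L1 sumRe] : exists L, has_sum (fun i => (complex.Re (f i))%:C) L.
  by apply/has_sum_real/(bounded_sums_le _ sf) => i; exact: normc_Re.
have [L2 sumIm] : exists L, has_sum (fun i => (complex.Im (f i))%:C) L.
  by apply/has_sum_real/(bounded_sums_le _ sf) => i; exact: normc_Im.
exists (L1 + 'i * L2); have := has_sumD sumRe (has_sumZ 'i sumIm).
by congr has_sum; apply: funext => i; rewrite [RHS]complexE.
Qed.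

Lemma usumcD f g : abs_summable f -> abs_summable g ->
  usumc (fun i => f i + g i) = usumc f + usumc g.
Proof. by move=> sf sg; apply/has_sum_usumc/has_sumD; exact: abs_summable_has_sum. Qed.

Lemma usumcZ c f : abs_summable f -> usumc (fun i => c * f i) = c * usumc f.
Proof. by move=> sf; apply/has_sum_usumc/has_sumZ; exact: abs_summable_has_sum. Qed.

Lemma usumc_fin f A : (forall i, i \notin A -> f i = 0) -> usumc f = finsum f A.
Proof.
move=> f0; apply: has_sum_usumc => e e_gt0; exists A => B /fsubsetP AB.
rewrite /finsum (big_uniq_widen _ _ AB) ?fset_uniq ?subrr ?normc0 ?ltW // => i _.
exact: f0.
Qed.

Lemma normc_usumc_le f M : abs_summable f ->
  (forall A, finsum (fun i => normc (f i)) A <= M) -> normc (usumc f) <= M.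
Proof.
move=> /abs_summable_has_sum sf fM; apply/ler_addgt0Pr => e e_gt0.
have [A0 A0f] := sf _ e_gt0; have := A0f _ (fsubset_refl A0).
have := le_trans (normc_sum _ _) (fM A0).
have := le_normcD (usumc f - finsum f A0) (finsum f A0).
by rewrite subrK normc_subC /finsum; lra.
Qed.

End UnorderedSums.

Section SumsOfFamilies.
Variables (R : realType) (I J : choiceType).
Local Notation C := R[i].
Implicit Types (s : seq J) (F : J -> I -> C).

Lemma abs_summable_sum s F : (forall j, abs_summable (F j)) ->
  abs_summable (fun i => \sum_(j <- s) F j i).
Proof.
move=> sF; elim: s => [|j s IHs].
  by apply: (@abs_summable_fin _ _ _ fset0) => i _; rewrite big_nil.
by apply: bounded_sums_le (abs_summableD (sF j) IHs) => i; rewrite big_cons.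
Qed.

Lemma usumc_sum s F : (forall j, abs_summable (F j)) ->
  usumc (fun i => \sum_(j <- s) F j i) = \sum_(j <- s) usumc (F j).
Proof.
move=> sF; elim: s => [|j s IHs].
  rewrite big_nil (@usumc_fin _ _ _ fset0) => [|i _]; rewrite ?big_nil //.
  by rewrite /finsum big_seq_fset0.
under eq_fun do rewrite big_cons.
by rewrite usumcD ?IHs ?big_cons //; exact: abs_summable_sum.
Qed.

Lemma has_sum_uniform s F (L : J -> C) : (forall j, has_sum (F j) (L j)) ->
  forall e, 0 < e -> exists A0 : {fset I}, forall B, fsubset A0 B ->
    forall j, j \in s -> normc (finsum (F j) B - L j) <= e.
Proof.
move=> FL e e_gt0; elim: s => [|j s [A0 A0F]]; first by exists fset0.
have [A1 A1F] := FL j e e_gt0; exists (A0 `|` A1)%fset => B.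
rewrite fsubUset => /andP[A0B A1B] j'; rewrite in_cons => /predU1P[->|]; first exact: A1F.
exact: A0F.
Qed.

Lemma weighted_normc_usumc_le s F (w : J -> R) (M : R) :
  (forall j, abs_summable (F j)) -> (forall j, 0 <= w j) ->
  (forall A, \sum_(j <- s) w j * finsum (fun i => normc (F j i)) A <= M) ->
  \sum_(j <- s) w j * normc (usumc (F j)) <= M.
Proof.
move=> sF w_ge0 FM; apply/ler_addgt0Pr => e e_gt0.
set W := \sum_(j <- s) w j; have W_ge0 : 0 <= W by exact: sumr_ge0.
set d := e / (W + 1); have d_gt0 : 0 < d by rewrite divr_gt0 // ltr_wpDl.
have [A0 A0F] := has_sum_uniform s (fun j => abs_summable_has_sum (sF j)) d_gt0.
have approx j : j \in s -> normc (usumc (F j)) <= finsum (fun i => normc (F j i)) A0 + d.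
  move=> js; have := A0F _ (fsubset_refl _) _ js.
  have := le_normcD (usumc (F j) - finsum (F j) A0) (finsum (F j) A0).
  have := normc_sum A0 (F j); rewrite subrK normc_subC /finsum; lra.
apply: le_trans (_ : \sum_(j <- s) w j * (finsum (fun i => normc (F j i)) A0 + d) <= _).
  by rewrite big_seq [X in _ <= X]big_seq; apply: ler_sum => j js; rewrite ler_wpM2l ?approx.
rewrite (eq_bigr _ (fun j _ => mulrDr _ _ _)) big_split /= -big_distrl /= -/W.
have : d * W <= e.
  by rewrite /d mulrAC ler_pdivrMr ?ltr_wpDl // mulrDr mulr1 lerDl ltW.
have := FM A0; lra.
Qed.

Lemma usumc_split (f : I -> C) (A : {fset I}) : abs_summable f ->
  usumc f = finsum f A + usumc (fun i => if i \in A then 0 else f i).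
Proof.
move=> sf; have sfA : abs_summable (fun i => if i \in A then f i else 0).
  by apply: (abs_summable_fin (A := A)) => i /negbTE ->.
have sfA' := abs_summable_restrict (mem A) sf.
have -> : finsum f A = usumc (fun i => if i \in A then f i else 0).
  by rewrite (usumc_fin (A := A)) => [|i /negbTE -> //]; apply: eq_big_seq => i ->.
by rewrite -usumcD //; congr usumc; apply: funext => i; case: ifP; rewrite ?addr0 ?add0r.
Qed.

(* Finitely many rows carry the double sum up to the tail of the bounded
   row sums. *)
Lemma fubini_usumc (h : I -> J -> C) (S : I -> seq J) :
  (forall i, uniq (S i)) -> (forall i j, j \notin S i -> h i j = 0) ->
  bounded_sums (fun i => \sum_(j <- S i) normc (h i j)) ->
  usumc (fun j => usumc (fun i => h i j)) = usumc (fun i => \sum_(j <- S i) h i j).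
Proof.
move=> uS hS bq.
pose q i := \sum_(j <- S i) normc (h i j); pose H i := \sum_(j <- S i) h i j.
rewrite -/(usumc H); rewrite -/(bounded_sums q) in bq.
have q_ge0 i : 0 <= q i by apply: sumr_ge0 => j _; exact: normc_ge0.
have row_le i (s : seq J) : uniq s -> \sum_(j <- s) normc (h i j) <= q i.
  move=> us; apply: ler_sum_uniq => // j _; first exact: normc_ge0.
  by move=> /hS ->; exact: normc0.
have normc_le_q i j : normc (h i j) <= q i by have := row_le i [:: j] erefl; rewrite big_seq1.
have sh j : abs_summable (fun i => h i j) by apply: bounded_sums_le bq => i.
have sH : abs_summable H by apply: bounded_sums_le bq => i; exact: normc_sum.
apply: has_sum_usumc => e e_gt0; have e2_gt0 : 0 < e / 2 by rewrite divr_gt0.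
have [A1 tailA1] := finsum_tail q_ge0 bq e2_gt0.
have [A2 A2H] := abs_summable_has_sum sH e2_gt0.
set A0 := (A1 `|` A2)%fset; exists (seq_fset tt (flatten (map S A0))) => B SB.
have h' j := usumc_split A0 (sh j).
rewrite /finsum (eq_bigr _ (fun j _ => h' j)) big_split /= -usumc_sum; last first.
  by move=> j; exact: abs_summable_restrict.
have -> : \sum_(j <- B) finsum (fun i => h i j) A0 = finsum H A0.
  rewrite /finsum exchange_big /=; apply: eq_big_seq => i iA0.
  apply: big_uniq_widen; [exact: uS | exact: fset_uniq | move=> j jS | by move=> j _ /hS].
  by apply: (fsubsetP SB); rewrite seq_fsetE; apply/flattenP; exists (S i); rewrite ?map_f.
set X := usumc _; have normX : normc X <= e / 2.
  apply: normc_usumc_le => [|A].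
    by apply: abs_summable_sum => j; exact: abs_summable_restrict.
  apply: le_trans (tailA1 A); rewrite /finsum [X in _ <= X]big_mkcond /=.
  apply: ler_sum => i _.
  apply: le_trans (normc_sum _ _) _; have [iA0|iA0] := boolP (i \in A0).
    rewrite big1 => [|j _]; first by case: ifP => // _; exact: q_ge0.
    exact: normc0.
  have -> : i \notin A1 by apply: contra iA0; rewrite in_fsetU => ->.
  exact/row_le/fset_uniq.
have := A2H A0 (fsubsetUr _ _); have := le_normcD (finsum H A0 - usumc H) X.
by rewrite addrAC /finsum; lra.
Qed.

End SumsOfFamilies.

(** * Expansions of planar series *)

Section Expansions.
Variable R : realType.
Local Notation C := R[i].
Implicit Types (g : pser R) (a b c d : C).

Definition pser_bounded g (rho : R) :=
  bounded_sums (fun U : ptree => normc (g U) * rho ^+ pdeg U).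

Lemma pexpansionE g a b T : pexpansion g a b T =
  usumc (fun U => g U * (pbinom U T)%:R * (b - a) ^+ (pdeg U - pdeg T)).
Proof. by []. Qed.

Lemma prad_gt g (s : R) : (s%:E < prad g)%E -> exists2 rho, s < rho & pser_bounded g rho.
Proof.
move=> /ereal_sup_gt [_ [rho [rho_ge0 fin_esum] <-]]; rewrite lte_fin => s_lt_rho.
exists rho => //; set E := (\esum_(T in _) _)%E in fin_esum.
have E_fin : E \is a fin_num.
  by rewrite ge0_fin_numE ?esum_ge0 // => T _; rewrite lee_fin mulr_ge0 ?normc_ge0 ?exprn_ge0.
exists (fine E) => A; rewrite -lee_fin fineK // /finsum -sumEFin fsbig_seq ?fset_uniq //.
by apply: ereal_sup_ubound; exists [set` A]%classic.
Qed.

Lemma prad_ge g (rho : R) : 0 <= rho -> pser_bounded g rho -> (rho%:E <= prad g)%E.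
Proof.
move=> rho_ge0 [M gM]; apply: ereal_sup_ubound; exists rho => //; split => //.
apply: le_lt_trans (ltry M); apply: ge_ereal_sup => _ [X [finX _] <-].
by rewrite fsbig_finite // sumEFin lee_fin; exact: gM.
Qed.

(* The term [V = T] of the planar binomial theorem for [rho = x + (rho - x)]. *)
Lemma pbinom_bound U T (x rho : R) : 0 <= x -> x <= rho ->
  (pbinom U T)%:R * x ^+ (pdeg U - pdeg T) * (rho - x) ^+ pdeg T <= rho ^+ pdeg U.
Proof.
move=> x_ge0 le_x_rho.
have term_ge0 V : 0 <= (pbinom U V)%:R * (x ^+ (pdeg U - pdeg V) * (rho - x) ^+ pdeg V).
  by rewrite mulr_ge0 ?ler0n // mulr_ge0 ?exprn_ge0 // subr_ge0.
rewrite -mulrA; have := pbinom_binomial U x (rho - x); rewrite [x + _]addrC subrK => <-.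
have [T_in|T_notin] := boolP (T \in contractions U); last first.
  by rewrite pbinom_notin // mul0r sumr_ge0.
have := ler_sum_uniq (s := [:: T]) (F := fun V => (pbinom U V)%:R *
  (x ^+ (pdeg U - pdeg V) * (rho - x) ^+ pdeg V)) erefl (uniq_contractions U).
by rewrite big_seq1; apply => // V; rewrite inE => /eqP ->; rewrite T_in.
Qed.

Lemma abs_summable_pexpansion_term g rho (x : C) T :
  pser_bounded g rho -> normc x < rho ->
  abs_summable (fun U => g U * (pbinom U T)%:R * x ^+ (pdeg U - pdeg T)).
Proof.
move=> [M gM] x_lt_rho; have x_ge0 := normc_ge0 x.
exists (M / (rho - normc x) ^+ pdeg T) => A.
rewrite ler_pdivlMr ?exprn_gt0 ?subr_gt0 // /finsum big_distrl /=.
apply: le_trans (gM A); apply: ler_sum => U _.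
rewrite !normcM normc_nat normcX -!mulrA ler_wpM2l ?normc_ge0 // mulrA.
exact: pbinom_bound (ltW x_lt_rho).
Qed.

Lemma prad_pexpansion g c d (t : R) : 0 <= t ->
  ((normc (d - c) + t)%:E < prad g)%E -> (t%:E < prad (pexpansion g c d))%E.
Proof.
move=> t_ge0 /prad_gt[rho lt_rho gb]; have [M gM] := gb.
set x := d - c in lt_rho *; have x_ge0 := normc_ge0 x; set r := rho - normc x.
apply: (@lt_le_trans _ _ r%:E); first by rewrite lte_fin /r; lra.
apply: prad_ge; first by rewrite /r; lra.
exists M => A; rewrite /finsum; under eq_bigr do rewrite mulrC.
apply: (weighted_normc_usumc_le
  (F := fun T U => g U * (pbinom U T)%:R * x ^+ (pdeg U - pdeg T))) => [T|T|B].
- by apply: abs_summable_pexpansion_term gb _; lra.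
- by rewrite exprn_ge0 // /r; lra.
rewrite /finsum; under eq_bigr do rewrite big_distrr.
rewrite exchange_big /=; apply: le_trans (gM B); apply: ler_sum => U _.
have split_term T : r ^+ pdeg T * normc (g U * (pbinom U T)%:R * x ^+ (pdeg U - pdeg T)) =
    normc (g U) * ((pbinom U T)%:R * (normc x ^+ (pdeg U - pdeg T) * r ^+ pdeg T)).
  by rewrite !normcM normc_nat normcX; ring.
rewrite (eq_bigr _ (fun T _ => split_term T)) -big_distrr ler_wpM2l ?normc_ge0 //=.
have -> : rho = normc x + r by rewrite /r; ring.
rewrite -pbinom_binomial; apply: ler_sum_uniq; rewrite ?fset_uniq ?uniq_contractions //.
  by move=> V _; rewrite mulr_ge0 ?ler0n // mulr_ge0 ?exprn_ge0 // /r; lra.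
by move=> V _ /pbinom_notin ->; rewrite mul0r.
Qed.

Lemma pexpansion_comp g a b c :
  ((normc (b - a) + normc (c - b))%:E < prad g)%E ->
  pexpansion (pexpansion g a b) b c = pexpansion g a c.
Proof.
move=> /prad_gt[rho lt_rho gb]; have [M gM] := gb.
have x_ge0 := normc_ge0 (b - a); have y_ge0 := normc_ge0 (c - b).
have xy : c - a = (b - a) + (c - b) by ring.
set x := b - a in x_ge0 lt_rho xy *; set y := c - b in y_ge0 lt_rho xy *.
apply: funext => T; rewrite !pexpansionE.
pose h U V := g U * ((pbinom U V)%:R * (x ^+ (pdeg U - pdeg V) *
  ((pbinom V T)%:R * y ^+ (pdeg V - pdeg T)))).
have -> : usumc (fun V => pexpansion g a b V * (pbinom V T)%:R * y ^+ (pdeg V - pdeg T)) =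
    usumc (fun V => usumc (fun U => h U V)).
  congr usumc; apply: funext => V; rewrite pexpansionE -mulrA mulrC -usumcZ; last first.
    by apply: abs_summable_pexpansion_term gb _; lra.
  by congr usumc; apply: funext => U; rewrite /h; ring.
rewrite (@fubini_usumc _ _ _ h contractions) => [||U V /pbinom_notin|].
- congr usumc; apply: funext => U.
  by rewrite /h -big_distrr /= pbinom_vandermonde xy; ring.
- exact: uniq_contractions.
- by rewrite /h => ->; rewrite mul0r mulr0.
have s_lt_rho : 0 < rho - (normc x + normc y) by rewrite subr_gt0.
exists (M / (rho - (normc x + normc y)) ^+ pdeg T) => A.
rewrite ler_pdivlMr ?exprn_gt0 // /finsum big_distrl /=.
apply: le_trans (gM A); apply: ler_sum => U _.
have normc_h V : normc (h U V) = normc (g U) * ((pbinom U V)%:R *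
    (normc x ^+ (pdeg U - pdeg V) * ((pbinom V T)%:R * normc y ^+ (pdeg V - pdeg T)))).
  by rewrite /h !normcM !normc_nat !normcX.
rewrite (eq_bigr _ (fun V _ => normc_h V)) -big_distrr /= pbinom_vandermonde -mulrA.
rewrite ler_wpM2l ?normc_ge0 //; exact: pbinom_bound (addr_ge0 _ _) (ltW lt_rho).
Qed.

Lemma pexpansion_id g b : pexpansion g b b = g.
Proof.
apply: funext => T; rewrite pexpansionE subrr (usumc_fin (A := [fset T]%fset)) => [|U].
  by rewrite /finsum big_seq_fset1 pbinom_small // eqxx subnn expr0 !mulr1.
rewrite in_fset1 => UT; have [le_UT|lt_TU] := leqP (pdeg U) (pdeg T).
  by rewrite pbinom_small // (negbTE UT) mulr0 mul0r.
by rewrite expr0n subn_eq0 leqNgt lt_TU mulr0.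
Qed.

End Expansions.

(** * Analytic continuation along a segment *)

Section Segment.
Variable R : realType.
Implicit Types (a b : R[i]) (s t : R).

Definition lerp a b t : R[i] := a + t%:C * (b - a).

Lemma lerp0 a b : lerp a b 0 = a.
Proof. by rewrite /lerp mul0r addr0. Qed.

Lemma lerp1 a b : lerp a b 1 = b.
Proof. by rewrite /lerp mul1r addrC subrK. Qed.

Lemma normc_lerpB a b s t : normc (lerp a b s - lerp a b t) = `|s - t| * normc (b - a).
Proof. by rewrite -normc_real -normcM rmorphB /lerp; congr normc; ring. Qed.

Lemma normc_lerp_le a b t (m : R) : 0 <= t <= 1 ->
  normc a <= m -> normc b <= m -> normc (lerp a b t) <= m.
Proof.
move=> /andP[t_ge0 t_le1] am bm; have t'_ge0 : 0 <= 1 - t by rewrite subr_ge0.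
have -> : lerp a b t = (1 - t)%:C * a + t%:C * b by rewrite /lerp rmorphB; ring.
apply: le_trans (le_normcD _ _) _; rewrite !normcM !normc_real !ger0_norm ?subr_ge0 //.
have := ler_wpM2l t_ge0 bm; have := ler_wpM2l t'_ge0 am; lra.
Qed.

Lemma normc_lerp_between a b s t : 0 <= s <= t -> t <= 1 ->
  normc (lerp a b t - lerp a b s) + normc (b - lerp a b t) = normc (b - lerp a b s).
Proof.
move=> /andP[s_ge0 le_st] t_le1.
have dist_b u : normc (b - lerp a b u) = `|1 - u| * normc (b - a).
  by rewrite -{1}(lerp1 a b) normc_lerpB.
rewrite !dist_b normc_lerpB.
by rewrite !ger0_norm ?subr_ge0 // ?(le_trans le_st) // -mulrDl addrC subrKA.
Qed.

End Segment.

Section Continuation.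
Variables (R : realType) (f : pser R).
Local Notation F a := (pexpansion f 0 a).

Lemma pexpansion_chain (c : nat -> R[i]) b N :
  (forall k, (k < N)%N -> ((normc (c k) + normc (c k.+1 - c k))%:E < prad f)%E) ->
  (forall k, (k < N)%N -> normc (c k.+1 - c k) + normc (b - c k.+1) = normc (b - c k)) ->
  ((normc (b - c 0%N))%:E < prad (F (c 0%N)))%E ->
  pexpansion (F (c 0%N)) (c 0%N) b = pexpansion (F (c N)) (c N) b.
Proof.
move=> inside aligned rad0.
suff chain k : (k <= N)%N -> pexpansion (F (c 0%N)) (c 0%N) b = pexpansion (F (c k)) (c k) b
    /\ ((normc (b - c k))%:E < prad (F (c k)))%E by case: (chain N (leqnn N)).
elim: k => [|k IHk] lt_kN; first by split.
have [-> radk] := IHk (ltnW lt_kN).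
have recentre : F (c k.+1) = pexpansion (F (c k)) (c k) (c k.+1).
  by rewrite pexpansion_comp // subr0; exact: inside.
have radk' : ((normc (c k.+1 - c k) + normc (b - c k.+1))%:E < prad (F (c k)))%E.
  by rewrite aligned.
rewrite recentre (pexpansion_comp radk').
by split; last exact: prad_pexpansion (normc_ge0 _) radk'.
Qed.

Lemma pexpansion_along_segment a b (m rho : R) :
  normc a <= m -> normc b <= m -> m < rho -> (rho%:E <= prad f)%E ->
  ((normc (b - a))%:E < prad (F a))%E -> pexpansion (F a) a b = F b.
Proof.
move=> am bm m_lt_rho rho_le rad_ab.
set N := (Num.truncn (normc (b - a) / (rho - m))).+1.
have N_gt0 : 0 < N%:R :> R by rewrite ltr0n.
pose t k : R := k%:R / N%:R.
have t_ge0 k : 0 <= t k by rewrite divr_ge0.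
have t_le1 k : (k <= N)%N -> t k <= 1 by move=> le_kN; rewrite ler_pdivrMr // mul1r ler_nat.
have t_le k : t k <= t k.+1 by rewrite ler_pM2r ?invr_gt0 // ler_nat.
have step k : normc (lerp a b (t k.+1) - lerp a b (t k)) = normc (b - a) / N%:R.
  rewrite normc_lerpB /t -mulrBl -natr1 addrAC subrr add0r mul1r.
  by rewrite ger0_norm ?invr_ge0 // mulrC.
have step_lt : normc (b - a) / N%:R < rho - m.
  have := truncnS_gt (normc (b - a) / (rho - m)); rewrite -/N ltr_pdivrMr ?subr_gt0 //.
  by rewrite ltr_pdivrMr // mulrC.
have := @pexpansion_chain (fun k => lerp a b (t k)) b N; rewrite /t mul0r lerp0.
rewrite divff ?pnatr_eq0 // lerp1 pexpansion_id; apply=> // k lt_kN.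
  rewrite step; apply: lt_le_trans rho_le; rewrite lte_fin.
  have : normc (lerp a b (k%:R / N%:R)) <= m.
    by apply: normc_lerp_le => //; rewrite t_ge0 t_le1 // ltnW.
  lra.
by apply: normc_lerp_between; rewrite ?t_ge0 ?t_le ?t_le1.
Qed.

End Continuation.

Theorem proposition3p1 (R : realType) (f : pser R) :
  (0 < prad f)%E ->
  planar_analytic
    [set a : complex R | ((ComplexField.Normc.normc a)%:E < prad f)%E]
    (fun a => pexpansion f 0 a).
Proof.
move=> _; split=> [a fa | a b fa fb rad_ab].
  by apply: (@prad_pexpansion _ f 0 a 0) => //; rewrite subr0 addr0.
set m := Num.max (normc a) (normc b).
have [rho m_lt_rho f_rho] : exists2 rho, m < rho & pser_bounded f rho.
  by apply: prad_gt; rewrite /m maxEle; case: ifP.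
apply: (pexpansion_along_segment (m := m) (rho := rho)) => //; rewrite ?le_max ?lexx ?orbT //.
by apply: prad_ge f_rho; rewrite (le_trans _ (ltW m_lt_rho)) // le_max normc_ge0.
Qed.
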